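(* Assume $a_2\neq 0$, $b_2\neq 0$ and that the $h_k$ are pairwise distinct. With $z_1=qa_1/a_2$ and $y_1,y_2,y_3$ as defined, for all $n\geq k\geq 0$, $$c_{n,k}=\frac{b_2^{\,n-k}}{q^{(n-k)k}}\cdot\frac{(q^{k+1};q)_{n-k}\,(q^ky_1;q)_{n-k}\,(q^ky_2;q)_{n-k}\,(q^ky_3;q)_{n-k}}{(q;q)_{n-k}\,(z_1q^{n+k-1};q)_{n-k}}.$$
   Context: Fix $q\in\mathbb{C}$ with $q\neq 0$ and $|q|\neq 1$. Fix complex parameters $a_1,a_2,b_0,b_1,b_2,s_1,s_2$, put $s_0=-s_1-s_2$, and for $k\geq 0$ define $x_k=b_0+b_1q^k+b_2q^{-k}$, $h_k=a_1q^k+a_2q^{-k}$, $d_k=s_0+s_1q^k+s_2q^{-k}$. Let $g_0=0$ and $g_k=x_{k-1}(h_k-h_0)+d_k$ for $k\geq 1$. Define $c_{n,n}=1$ and $c_{n,k}=\prod_{j=k}^{n-1}\frac{g_{j+1}}{h_n-h_j}$ for $0\leq k<n$ (these are the coefficients of the monic polynomial $u_n(t)=\sum_{k=0}^nc_{n,k}v_k(t)$ in the Newton basis $v_k(t)=\prod_{i=0}^{k-1}(t-x_i)$). Put $z_1=qa_1/a_2$, $z_2=qb_1/b_2$, and let $y_1,y_2,y_3$ be the roots of the cubic with $y_1+y_2+y_3=z_1-\frac{b_0+s_2/a_2}{b_2}$, $y_1y_2+y_1y_3+y_2y_3=\frac{z_2}{q}-\frac{qs_1/a_2+b_0z_1}{b_2}$,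 $y_1y_2y_3=\frac{z_1z_2}{q}$. $(t;q)_k=\prod_{i=0}^{k-1}(1-q^it)$. *)

From HB Require Import structures.
From mathcomp Require Import all_boot all_order all_algebra.
From mathcomp Require Export complex.
From mathcomp Require Export reals.
Set Implicit Arguments. Unset Strict Implicit. Unset Printing Implicit Defensive.
Import Order.TTheory GRing.Theory Num.Theory.
Local Open Scope ring_scope.

Section Defs.
Variable C : fieldType.

(* q-Pochhammer symbol (t;q)_k = prod_{i=0}^{k-1} (1 - q^i t) *)
Definition qpoch (q t : C) (k : nat) : C := \prod_(i < k) (1 - q ^+ i * t).

Definition xk (q b0 b1 b2 : C) (k : nat) : C := b0 + b1 * q ^+ k + b2 * q ^- k.
Definition hk (q a1 a2 : C) (k : nat) : C := a1 * q ^+ k + a2 * q ^- k.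
Definition dk (q s1 s2 : C) (k : nat) : C := (- s1 - s2) + s1 * q ^+ k + s2 * q ^- k.
Definition gk (q a1 a2 b0 b1 b2 s1 s2 : C) (k : nat) : C :=
  if k is k'.+1 then
    xk q b0 b1 b2 k' * (hk q a1 a2 k - hk q a1 a2 0) + dk q s1 s2 k
  else 0.
Definition cnk (q a1 a2 b0 b1 b2 s1 s2 : C) (n k : nat) : C :=
  \prod_(k <= j < n) (gk q a1 a2 b0 b1 b2 s1 s2 j.+1 / (hk q a1 a2 n - hk q a1 a2 j)).
End Defs.

From HB Require Import structures.
From mathcomp Require Import all_boot all_order all_algebra.
From mathcomp Require Import complex reals.
From mathcomp Require Import ring zify.
Import Order.TTheory GRing.Theory Num.Theory.
Local Open Scope ring_scope.

(* Put n = k + m and argue by induction on m = n - k, for all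
   k at once.  Peeling off the first factor of the product defining c_{n,k}
   gives  c_{n,k} = g_{k+1} / (h_n - h_k) * c_{n,k+1}.  Two factorisations
   make this step explicit:
   - by Vieta's formulas, g_{k+1} = a2 b2 (1 - q^{k+1}) P(q^k) / (q q^{2k}),
     where P(u) = (1 - u y1)(1 - u y2)(1 - u y3);
   - h_{k+1+m} - h_k = a2 (1 - q^{m+1}) (1 - z1 q^{2k+m}) / (q^{k+m+1}).
   Their quotient is an explicit "step factor", and the conjectured closed
   form satisfies the same recursion with the same step factor (peel one
   factor off each q-Pochhammer symbol).  All identities hold in any field;
   inverses of possibly vanishing factors are never cancelled. *)

Section QPochhammer.
Variable C : fieldType.

Lemma qpoch0 (q t : C) : qpoch q t 0 = 1.
Proof. by rewrite /qpoch big_ord0. Qed.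

Lemma qpochS (q t : C) m : qpoch q t m.+1 = (1 - t) * qpoch q (q * t) m.
Proof.
rewrite /qpoch big_ord_recl /= expr0 mul1r; congr (_ * _).
by apply: eq_bigr => i _; rewrite /bump /= add1n exprS -mulrA mulrCA.
Qed.

Lemma qpochSr (q t : C) m : qpoch q t m.+1 = qpoch q t m * (1 - q ^+ m * t).
Proof. by rewrite /qpoch big_ord_recr. Qed.

End QPochhammer.

Lemma expz_pred (C : fieldType) (q : C) N : (0 < N)%N -> q ^ (N%:Z - 1) = q ^+ N.-1.
Proof. by case: N => // N _; rewrite intS addrC addKr. Qed.

Lemma cnk_recl (C : fieldType) (q a1 a2 b0 b1 b2 s1 s2 : C) n k : (k < n)%N ->
  cnk q a1 a2 b0 b1 b2 s1 s2 n k =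
  gk q a1 a2 b0 b1 b2 s1 s2 k.+1 / (hk q a1 a2 n - hk q a1 a2 k)
  * cnk q a1 a2 b0 b1 b2 s1 s2 n k.+1.
Proof. by move=> lt_kn; rewrite /cnk big_ltn. Qed.

Lemma cubic_reversed (C : comPzRingType) (u y1 y2 y3 : C) :
  (1 - u * y1) * (1 - u * y2) * (1 - u * y3) =
  1 - u * (y1 + y2 + y3) + u ^+ 2 * (y1 * y2 + y1 * y3 + y2 * y3)
  - u ^+ 3 * (y1 * y2 * y3).
Proof. by ring. Qed.

Section Coefficients.
Variables (C : fieldType) (q a1 a2 b0 b1 b2 s1 s2 y1 y2 y3 : C).
Hypotheses (q_neq0 : q != 0) (a2_neq0 : a2 != 0) (b2_neq0 : b2 != 0).

Let z1 := q * a1 / a2.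

Definition cubic_factor (u : C) : C := (1 - u * y1) * (1 - u * y2) * (1 - u * y3).

(* The common ratio c_{k+m+1,k} / c_{k+m+1,k+1} of both sides. *)
Definition step_factor (m k : nat) : C :=
  b2 * q ^+ m / q ^+ k * ((1 - q ^+ k.+1) * cubic_factor (q ^+ k))
  / ((1 - q ^+ m.+1) * (1 - z1 * q ^+ (k + m + k))).

Definition cnk_closed (m k : nat) : C :=
  b2 ^+ m / q ^+ (m * k) *
  ((qpoch q (q ^+ k.+1) m * qpoch q (q ^+ k * y1) m
    * qpoch q (q ^+ k * y2) m * qpoch q (q ^+ k * y3) m)
   / (qpoch q q m * qpoch q (z1 * q ^ ((k + m + k)%:Z - 1)) m)).

Hypotheses
  (e1 : y1 + y2 + y3 = z1 - (b0 + s2 / a2) / b2)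
  (e2 : y1 * y2 + y1 * y3 + y2 * y3 = (q * b1 / b2) / q - (q * s1 / a2 + b0 * z1) / b2)
  (e3 : y1 * y2 * y3 = z1 * (q * b1 / b2) / q).

(* The roots y_i are exactly what makes g_{k+1} factor:
   g_{k+1} = a2 b2 (1 - q^{k+1}) P(q^k) / (q q^{2k}). *)
Lemma gk_factor k :
  gk q a1 a2 b0 b1 b2 s1 s2 k.+1 =
  a2 * b2 * (1 - q * q ^+ k) * cubic_factor (q ^+ k) / (q * q ^+ k ^+ 2).
Proof.
have qk_neq0 : q ^+ k != 0 by rewrite expf_neq0.
rewrite /cubic_factor cubic_reversed e1 e2 e3 /gk /xk /hk /dk /z1 exprS expr0 invr1 /=.
move: (q ^+ k) qk_neq0 => u u_neq0.
by field; rewrite ?q_neq0 ?u_neq0 ?a2_neq0 ?b2_neq0 ?mulf_neq0.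
Qed.

Lemma hk_diff_factor k m :
  hk q a1 a2 (k.+1 + m) - hk q a1 a2 k =
  a2 / (q ^+ k * q ^+ m * q) * (1 - q ^+ m * q) * (1 - z1 * (q ^+ k * q ^+ m * q ^+ k)).
Proof.
have qk_neq0 : q ^+ k != 0 by rewrite expf_neq0.
have qm_neq0 : q ^+ m != 0 by rewrite expf_neq0.
rewrite /hk /z1 addSn exprS exprD.
move: (q ^+ k) (q ^+ m) qk_neq0 qm_neq0 => u r u_neq0 r_neq0.
by field; rewrite ?q_neq0 ?u_neq0 ?r_neq0 ?a2_neq0 ?mulf_neq0.
Qed.

(* The recursion step of c_{n,k} is multiplication by the step factor; the
   possibly vanishing factors are only inverted, never cancelled. *)
Lemma cnk_step_ratio k m :
  gk q a1 a2 b0 b1 b2 s1 s2 k.+1 / (hk q a1 a2 (k.+1 + m) - hk q a1 a2 k)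
  = step_factor m k.
Proof.
have qk_neq0 : q ^+ k != 0 by rewrite expf_neq0.
have qm_neq0 : q ^+ m != 0 by rewrite expf_neq0.
rewrite /step_factor (exprS q k) (exprSr q m) !exprD gk_factor hk_diff_factor !invfM.
move: (q ^+ k) (q ^+ m) qk_neq0 qm_neq0 => u r u_neq0 r_neq0.
move: (1 - r * q)^-1 (1 - z1 * (u * r * u))^-1 (cubic_factor u) => X Y P.
rewrite !invrK.
by field; rewrite ?q_neq0 ?u_neq0 ?r_neq0 ?a2_neq0 ?mulf_neq0.
Qed.

(* The closed form obeys the same recursion: peel the first factor off every
   q-Pochhammer symbol except (q;q), which loses its last one. *)
Lemma cnk_closedS m k : cnk_closed m.+1 k = step_factor m k * cnk_closed m k.+1.
Proof.
have qk_neq0 : q ^+ k != 0 by rewrite expf_neq0.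
have qm_neq0 : q ^+ m != 0 by rewrite expf_neq0.
have qmk_neq0 : q ^+ (m * k) != 0 by rewrite expf_neq0.
rewrite /cnk_closed /step_factor /cubic_factor (@qpochSr _ q q) !qpochS.
rewrite !(mulrA q (q ^+ k)) -!exprS -exprSr !expz_pred; [|lia|lia].
have -> : ((k + m.+1 + k).-1 = k + m + k)%N by lia.
have -> : ((k.+1 + m + k.+1).-1 = (k + m + k).+1)%N by lia.
have -> : q * (z1 * q ^+ (k + m + k)) = z1 * q ^+ (k + m + k).+1
  by rewrite exprS mulrCA.
rewrite (mulSn m k) (mulnS m k) (exprS b2) !exprD !invfM.
move: (qpoch q _ m) (qpoch q _ m) (qpoch q _ m) (qpoch q _ m) (qpoch q q m)
  (qpoch q (z1 * _) m) => P0 P1 P2 P3 Q Z.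
move: Q^-1 Z^-1 (1 - q ^+ m.+1)^-1 (1 - z1 * (q ^+ k * q ^+ m * q ^+ k))^-1 => Qi Zi X Y.
move: (q ^+ k) (q ^+ m) (q ^+ (m * k)) qk_neq0 qm_neq0 qmk_neq0 => u r t u0 r0 t0.
by field; rewrite ?u0 ?r0 ?t0 ?mulf_neq0.
Qed.

Lemma cnk_closed_form m k : cnk q a1 a2 b0 b1 b2 s1 s2 (k + m) k = cnk_closed m k.
Proof.
elim: m k => [|m IH] k.
  by rewrite /cnk /cnk_closed addn0 big_geq // !qpoch0 mul0n !expr0 !(mulr1, invr1).
rewrite cnk_recl; last by lia.
by rewrite -addSnnS cnk_step_ratio IH cnk_closedS.
Qed.

End Coefficients.

Local Open Scope complex_scope.

Theorem mainTheorem8 (R : realType) (q a1 a2 b0 b1 b2 s1 s2 y1 y2 y3 : R[i]) :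
  q != 0 -> `|q| != 1 ->
  a2 != 0 -> b2 != 0 ->
  (forall i j : nat, i <> j -> hk q a1 a2 i != hk q a1 a2 j) ->
  let z1 := q * a1 / a2 in
  let z2 := q * b1 / b2 in
  y1 + y2 + y3 = z1 - (b0 + s2 / a2) / b2 ->
  y1 * y2 + y1 * y3 + y2 * y3 = z2 / q - (q * s1 / a2 + b0 * z1) / b2 ->
  y1 * y2 * y3 = z1 * z2 / q ->
  forall n k : nat, (k <= n)%N ->
    cnk q a1 a2 b0 b1 b2 s1 s2 n k =
      b2 ^+ (n - k) / q ^+ ((n - k) * k) *
      ((qpoch q (q ^+ k.+1) (n - k) * qpoch q (q ^+ k * y1) (n - k)
        * qpoch q (q ^+ k * y2) (n - k) * qpoch q (q ^+ k * y3) (n - k))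
       / (qpoch q q (n - k) * qpoch q (z1 * q ^ ((n + k)%:Z - 1)) (n - k))).
Proof.
move=> q_neq0 _ a2_neq0 b2_neq0 _ z1 z2 e1 e2 e3 n k le_kn.
have [m ->] : exists m, n = (k + m)%N by exists (n - k)%N; lia.
rewrite addKn.
exact: (cnk_closed_form _ q a1 a2 b0 b1 b2 s1 s2 y1 y2 y3 q_neq0 a2_neq0 b2_neq0 e1 e2 e3).
Qed.
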